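(* Let $A=(A_1,A_2)\in\mathbb{N}^2$ with $\gcd(A_1,A_2)=1$, let $s\ge 2$, and let $$p(x,y)=\sum_{i=1}^s a_i x^{\alpha_i}y^{\beta_i},$$ where $a_i\neq 0$, $\alpha_i,\beta_i\in\mathbb{N}\cup\{0\}$, $A_1\alpha_i+A_2\beta_i=B$ for all $i=1,\dots,s$ with a common $B\in\mathbb{N}$, and $\alpha_1>\alpha_2>\dots>\alpha_s\ge 0$. Put $\nu_i=(\alpha_1-\alpha_i)/A_2$ (these are nonnegative integers) and $g(u)=\sum_{i=1}^s a_i u^{\nu_i}$. Then $p(x,y)\ge 0$ for all $(x,y)\in\mathbb{R}^2$ if and only if both of the following hold: (1) $a_1>0$, $a_s>0$, and $\alpha_1,\beta_1,\alpha_s,\beta_s$ are even nonnegative integers; (2) the polynomial $g$ is nonnegative on $\mathbb{R}$, i.e. either $g$ has no real roots or all its real roots have even multiplicity.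
   Context: $\mathbb{N}=\{1,2,\dots\}$. The polynomial $g$ is called the characteristic polynomial of the form $p$; for $x\neq 0$ one has $p(x,y)=x^{\alpha_1}y^{\beta_1}g(x^{-A_2}y^{A_1})$. *)

From HB Require Import structures.
From mathcomp Require Import all_boot all_order all_algebra.
From mathcomp Require Import reals.
Set Implicit Arguments. Unset Strict Implicit. Unset Printing Implicit Defensive.
Import Order.TTheory GRing.Theory Num.Theory.
Local Open Scope ring_scope.

(* Terms are indexed 0..s-1 (paper: 1..s). *)

Definition qh_form (R : realType) (s : nat) (a : nat -> R) (alpha beta : nat -> nat)
  (x y : R) : R :=
  \sum_(i < s) a i * x ^+ alpha i * y ^+ beta i.

(* nu_i = (alpha_1 - alpha_i) / A_2 (an exact division under the hypotheses). *)
Definition nu (A2 : nat) (alpha : nat -> nat) (i : nat) : nat :=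
  ((alpha 0 - alpha i) %/ A2)%N.

Definition form_charpoly (R : realType) (s : nat) (a : nat -> R) (A2 : nat)
  (alpha : nat -> nat) : {poly R} :=
  \sum_(i < s) a i *: 'X^(nu A2 alpha i).

From HB Require Import structures.
From mathcomp Require Import all_boot all_order all_algebra.
From mathcomp Require Import reals polyrcf.
From mathcomp Require Import zify ring lra.
Set Implicit Arguments. Unset Strict Implicit. Unset Printing Implicit Defensive.
Import Order.TTheory GRing.Theory Num.Theory.
Local Open Scope ring_scope.

(* Off the axis x = 0 the form factors as
     p(x, y) = x^alpha_1 y^beta_1 g(x^-A2 y^A1),
   which gives sufficiency once the single surviving term a_s y^beta_s on
   x = 0 is checked.  Conversely, a_1 x^alpha_1 y^beta_1 is the dominant
   term of p(tx, y) and a_s x^alpha_s y^beta_s that of p(x, ty) as t grows,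
   so these monomials are nonnegative, which forces (1).  Finally, with
   Bezout coefficients k A1 = l A2 + 1, along the curve (u^l, u^k) the form
   equals u^(l alpha_1 + k beta_1) g(u), and that exponent is even. *)

Lemma ge0_poly_lead_coef_ge0 (R : realFieldType) (p : {poly R}) :
  (forall x, 0 <= p.[x]) -> 0 <= lead_coef p.
Proof.
move=> p_ge0; rewrite leNgt; apply/negP => lc_lt0.
have [n Hn] : exists n, forall x, n <= x -> lead_coef (- p) <= (- p).[x].
  by apply: poly_pinfty_gt_lc; rewrite lead_coefN oppr_gt0.
have := Hn n (lexx n); have := p_ge0 n; rewrite hornerN lead_coefN; lra.
Qed.

Lemma dominant_coef_ge0 (R : realFieldType) (s : nat) (c : nat -> R)
    (e : nat -> nat) (j : nat) :
  (j < s)%N -> (forall i, (i < s)%N -> i != j -> (e i < e j)%N) ->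
  (forall x, 0 <= \sum_(i < s) c i * x ^+ e i) -> 0 <= c j.
Proof.
move=> js e_lt sum_ge0; have [-> // | cj_neq0] := eqVneq (c j) 0.
pose p := \sum_(i < s) c i *: 'X^(e i).
have lcp : lead_coef p = c j.
  rewrite /p (bigD1 (Ordinal js)) //= lead_coefDl.
    by rewrite lead_coefZ lead_coefXn mulr1.
  rewrite size_scale // size_polyXn ltnS.
  apply: leq_trans (size_sum _ _ _) _; apply/bigmax_leqP => i ij.
  rewrite (leq_trans (size_scale_leq _ _)) // size_polyXn.
  by apply: e_lt => //; apply: contra ij => /eqP ij; apply/eqP/val_inj.
rewrite -lcp; apply: ge0_poly_lead_coef_ge0 => x.
rewrite horner_sum; under eq_bigr => i _ do rewrite hornerZ hornerXn.
exact: sum_ge0.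
Qed.

Lemma monomial_ge0_even (R : realDomainType) (c : R) (m n : nat) :
  c != 0 -> (forall x y, 0 <= c * x ^+ m * y ^+ n) ->
  [/\ 0 < c, ~~ odd m & ~~ odd n].
Proof.
move=> c_neq0 mon_ge0.
have c_gt0 : 0 < c.
  by rewrite lt_def c_neq0 /=; have := mon_ge0 1 1; rewrite !expr1n !mulr1.
have even_of_ge0 k : 0 <= c * (-1) ^+ k -> ~~ odd k.
  by rewrite -signr_odd; case: (odd k) => //; rewrite expr1 mulrN1 oppr_ge0 leNgt c_gt0.
split => //; apply: even_of_ge0.
  by have := mon_ge0 (-1) 1; rewrite expr1n mulr1.
by have := mon_ge0 1 (-1); rewrite expr1n mulr1.
Qed.

Lemma horner_form_charpoly (R : realType) (s : nat) (a : nat -> R) (A2 : nat)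
    (alpha : nat -> nat) (u : R) :
  (form_charpoly s a A2 alpha).[u] = \sum_(i < s) a i * u ^+ nu A2 alpha i.
Proof.
rewrite horner_sum; apply: eq_bigr => i _.
by rewrite hornerZ hornerXn.
Qed.

Section QuasiHomogeneousForm.

Variables (A1 A2 s B : nat) (alpha beta : nat -> nat).
Hypothesis A1_gt0 : (0 < A1)%N.
Hypothesis A2_gt0 : (0 < A2)%N.
Hypothesis coprime_A : coprime A1 A2.
Hypothesis weighted_degree :
  forall i, (i < s)%N -> (A1 * alpha i + A2 * beta i)%N = B.
Hypothesis alpha_decr : forall i, (i.+1 < s)%N -> (alpha i.+1 < alpha i)%N.

Lemma alpha_lt i j : (i < j)%N -> (j < s)%N -> (alpha j < alpha i)%N.
Proof.
move=> ij js.
have alpha_homo : {in gtn s &, {homo alpha : m n / (m < n)%N >-> (n < m)%N}}.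
  apply: homo_ltn_in => [n m k /= mn nk | m n _ nD k /andP[_ kn] | m _].
  - exact: ltn_trans nk mn.
  - exact: ltn_trans kn nD.
  - exact: alpha_decr.
by apply: alpha_homo => //; apply: ltn_trans ij js.
Qed.

Lemma beta_lt i j : (i < j)%N -> (j < s)%N -> (beta i < beta j)%N.
Proof.
move=> ij js; have := alpha_lt ij js.
have := weighted_degree js; have := weighted_degree (ltn_trans ij js); nia.
Qed.

Lemma alpha0_nu i : (i < s)%N -> alpha 0 = (alpha i + A2 * nu A2 alpha i)%N.
Proof.
move=> i_lt_s; have alpha_le : (alpha i <= alpha 0)%N.
  by case: i i_lt_s => // i i_lt_s; apply/ltnW/alpha_lt.
have : (A2 %| (alpha 0 - alpha i) * A1)%N.
  apply/dvdnP; exists (beta i - beta 0)%N.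
  have := weighted_degree i_lt_s.
  have := weighted_degree (leq_ltn_trans (leq0n i) i_lt_s); nia.
rewrite Gauss_dvdl; last by rewrite coprime_sym.
by rewrite /nu mulnC => /divnK ->; rewrite subnKC.
Qed.

Lemma beta_nu i : (i < s)%N -> beta i = (beta 0 + A1 * nu A2 alpha i)%N.
Proof.
move=> i_lt_s; have := alpha0_nu i_lt_s.
have := weighted_degree i_lt_s.
have := weighted_degree (leq_ltn_trans (leq0n i) i_lt_s).
move=> *; apply/eqP; rewrite -(eqn_pmul2l A2_gt0); apply/eqP; nia.
Qed.

Lemma nu_gt0 i : (0 < i)%N -> (i < s)%N -> (0 < nu A2 alpha i)%N.
Proof.
by move=> i_gt0 i_lt_s; have := alpha_lt i_gt0 i_lt_s; have := alpha0_nu i_lt_s; nia.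
Qed.

Variables (R : realType) (a : nat -> R).

Lemma form_charpoly_at0 : (0 < s)%N -> (form_charpoly s a A2 alpha).[0] = a 0.
Proof.
move=> s_gt0; rewrite horner_form_charpoly (bigD1 (Ordinal s_gt0)) //=.
rewrite /nu subnn div0n expr0 mulr1 big1 ?addr0 // => i i_neq0.
rewrite expr0n eqn0Ngt nu_gt0 ?mulr0 // lt0n.
by apply: contra i_neq0 => /eqP i0; apply/eqP/val_inj.
Qed.

Lemma qh_form_charpolyE (x y : R) : x != 0 ->
  qh_form s a alpha beta x y =
  x ^+ alpha 0 * y ^+ beta 0 * (form_charpoly s a A2 alpha).[x^-1 ^+ A2 * y ^+ A1].
Proof.
move=> x_neq0; rewrite horner_form_charpoly mulr_sumr; apply: eq_bigr => i _.
rewrite (alpha0_nu (ltn_ord i)) (beta_nu (ltn_ord i)) !exprD exprMn -!exprM exprVn.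
have : x ^+ (A2 * nu A2 alpha i) != 0 by rewrite expf_neq0.
move: (x ^+ (A2 * nu A2 alpha i)) => X X_neq0.
by field.
Qed.

Lemma qh_form_curveE (k l : nat) (u : R) : (k * A1 = l * A2 + 1)%N ->
  qh_form s a alpha beta (u ^+ l) (u ^+ k) =
  u ^+ (l * alpha 0 + k * beta 0) * (form_charpoly s a A2 alpha).[u].
Proof.
move=> bezout; rewrite horner_form_charpoly mulr_sumr; apply: eq_bigr => i _.
rewrite -!exprM -mulrA -exprD mulrCA -exprD; congr (_ * _ ^+ _).
rewrite (alpha0_nu (ltn_ord i)) (beta_nu (ltn_ord i)); nia.
Qed.

Lemma qh_form0y (y : R) : (0 < s)%N ->
  qh_form s a alpha beta 0 y = a s.-1 * 0 ^+ alpha s.-1 * y ^+ beta s.-1.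
Proof.
move=> s_gt0; have last_lt_s : (s.-1 < s)%N by rewrite prednK.
rewrite /qh_form (bigD1 (Ordinal last_lt_s)) //= big1 ?addr0 // => i i_neq_last.
have i_lt_last : (i < s.-1)%N.
  rewrite ltn_neqAle -ltnS prednK // ltn_ord andbT.
  by apply: contra i_neq_last => /eqP i_last; apply/eqP/val_inj.
have := alpha_lt i_lt_last last_lt_s.
by case: (alpha i) => // n _; rewrite expr0n mulr0 mul0r.
Qed.

Hypothesis qh_form_ge0 : forall x y : R, 0 <= qh_form s a alpha beta x y.

Lemma qh_form_ge0_first_term (x y : R) : (0 < s)%N ->
  0 <= a 0 * x ^+ alpha 0 * y ^+ beta 0.
Proof.
move=> s_gt0.
apply: (@dominant_coef_ge0 _ s (fun i => a i * x ^+ alpha i * y ^+ beta i) alpha).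
- exact: s_gt0.
- by move=> i i_lt_s i_neq0; apply: alpha_lt; rewrite // lt0n.
- move=> t; have := qh_form_ge0 (x * t) y; rewrite /qh_form.
  by under eq_bigr => i _ do rewrite exprMn mulrA mulrAC.
Qed.

Lemma qh_form_ge0_last_term (x y : R) : (0 < s)%N ->
  0 <= a s.-1 * x ^+ alpha s.-1 * y ^+ beta s.-1.
Proof.
move=> s_gt0; have last_lt_s : (s.-1 < s)%N by rewrite prednK.
apply: (@dominant_coef_ge0 _ s (fun i => a i * x ^+ alpha i * y ^+ beta i) beta).
- exact: last_lt_s.
- move=> i i_lt_s i_neq_last; apply: beta_lt => //.
  by rewrite ltn_neqAle i_neq_last -ltnS prednK.
- move=> t; have := qh_form_ge0 x (y * t); rewrite /qh_form.
  by under eq_bigr => i _ do rewrite exprMn mulrA.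
Qed.

End QuasiHomogeneousForm.

Theorem mainTheorem1 (R : realType) (A1 A2 : nat) (s : nat) (B : nat)
  (a : nat -> R) (alpha beta : nat -> nat) :
  (0 < A1)%N -> (0 < A2)%N -> coprime A1 A2 ->
  (2 <= s)%N ->
  (0 < B)%N ->
  (forall i, (i < s)%N -> a i != 0) ->
  (forall i, (i < s)%N -> (A1 * alpha i + A2 * beta i)%N = B) ->
  (forall i, (i.+1 < s)%N -> (alpha i.+1 < alpha i)%N) ->
  (forall x y : R, 0 <= qh_form s a alpha beta x y) <->
  ((0 < a 0%N /\ 0 < a s.-1 /\
    ~~ odd (alpha 0%N) /\ ~~ odd (beta 0%N) /\
    ~~ odd (alpha s.-1) /\ ~~ odd (beta s.-1)) /\
   (forall u : R, 0 <= (form_charpoly s a A2 alpha).[u])).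
Proof.
move=> A1_gt0 A2_gt0 coprime_A s_ge2 _ a_neq0 weighted_degree alpha_decr.
have s_gt0 : (0 < s)%N by apply: leq_trans s_ge2.
have last_lt_s : (s.-1 < s)%N by rewrite prednK.
split=> [qh_ge0 | ].
- have [a0_gt0 alpha0_even beta0_even] := monomial_ge0_even (a_neq0 0%N s_gt0)
    (fun x y => qh_form_ge0_first_term alpha_decr qh_ge0 x y s_gt0).
  have [alast_gt0 alpha_last_even beta_last_even] :=
    monomial_ge0_even (a_neq0 s.-1 last_lt_s) (fun x y => qh_form_ge0_last_term
      A1_gt0 A2_gt0 coprime_A weighted_degree alpha_decr qh_ge0 x y s_gt0).
  do !split=> // u; have [->|u_neq0] := eqVneq u 0.
    rewrite (form_charpoly_at0 A1_gt0 A2_gt0 coprime_A weighted_degree alpha_decr) //.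
    exact: ltW.
  have [k l bezout _] := egcdnP A2 A1_gt0; rewrite (eqP coprime_A) in bezout.
  have := qh_ge0 (u ^+ l) (u ^+ k).
  rewrite (qh_form_curveE A1_gt0 A2_gt0 coprime_A weighted_degree alpha_decr) //.
  rewrite pmulr_rge0 // exprn_even_gt0 ?u_neq0 ?orbT // oddD !oddM.
  by rewrite (negbTE alpha0_even) (negbTE beta0_even) !andbF.
- move=> [[_ [alast_gt0 [alpha0_even [beta0_even [_ beta_last_even]]]]] g_ge0] x y.
  have [->|x_neq0] := eqVneq x 0.
    rewrite (qh_form0y beta alpha_decr) // mulr_ge0 ?exprn_even_ge0 //.
    by apply: mulr_ge0; [exact: ltW | exact: exprn_ge0].
  rewrite (qh_form_charpolyE A1_gt0 A2_gt0 coprime_A weighted_degree alpha_decr) //.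
  by rewrite !mulr_ge0 ?exprn_even_ge0.
Qed.
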